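(* Let $W=I_2(m)$, $m\ge3$, and let $\kappa^{(i)}_{\alpha,\beta},\kappa^{(i)}_{\beta,\alpha}$ ($1\le i\le m-2$) be the coefficients defined below. Put $D=\sum_{i=1}^{m-1}(-1)^i\big(\delta^{(m-i)}_{\alpha\ldots}+\delta^{(m-i)}_{\beta\ldots}\big)$. If $m$ is even, then $$X^{(m)}_{\alpha\ldots}=\sum_{i=1}^{m-2}(-1)^{m-i}\kappa^{(i)}_{\omega_i,\omega_{i+1}}X^{(i)}_{\omega_i\ldots}+y_{\Sigma^+}\big(\delta^{(m)}_{\alpha\ldots}+D+\mathbf 1\big),$$ $$X^{(m)}_{\beta\ldots}=\sum_{i=1}^{m-2}(-1)^{m-i}\kappa^{(i)}_{\omega_{i+1},\omega_i}X^{(i)}_{\omega_{i+1}\ldots}+y_{\Sigma^+}\big(\delta^{(m)}_{\beta\ldots}+D+\mathbf 1\big).$$ If $m$ is odd, then $$X^{(m)}_{\alpha\ldots}=\sum_{i=1}^{m-2}(-1)^{m-i}\kappa^{(i)}_{\omega_{i+1},\omega_i}X^{(i)}_{\omega_{i+1}\ldots}-y_{\Sigma^+}\big(\delta^{(m)}_{\alpha\ldots}+D-\mathbf 1\big),$$ $$X^{(m)}_{\beta\ldots}=\sum_{i=1}^{m-2}(-1)^{m-i}\kappa^{(i)}_{\omega_i,\omega_{i+1}}X^{(i)}_{\omega_i\ldots}-y_{\Sigma^+}\big(\delta^{(m)}_{\beta\ldots}+D-\mathbf 1\big).$$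
   Context: General setup: $W$ a finite real reflection group with root system $\Sigma$; $\mathcal{R}\subset\mathbb{R}$ the smallest subring containing all coefficients of roots in the basis of simple roots, with $\mathbb{Z}$-basis $B=(e_1=1,\dots,e_l)$; $R$ an integral domain containing $\mathcal{R}$; $F$ a one-dimensional commutative formal group law over $R$; $\Lambda$ the lattice spanned by $r\gamma$, $r\in\mathcal{R}$, $\gamma\in\Sigma$; $\mathcal{S}=R[[\Lambda]]/\mathcal{J}_F$ (completion of $R[x_\lambda:\lambda\in\Lambda]$ at the augmentation ideal, modulo the closed ideal generated by $x_0$ and $x_{e_i\gamma+e_j\gamma'}-((e_i\cdot_Fx_\gamma)+_F(e_j\cdot_Fx_{\gamma'}))$, where $e_i\cdot_F u=e_iu$), with $W$ acting by $w(x_\lambda)=x_{w(\lambda)}$; $\mathcal{Q}$ the localization of $\mathcal{S}$ at all $x_\gamma$; $\mathcal{Q}_W=\mathcal{Q}\otimes_RR[W]$ with left $\mathcal{Q}$-basis $\{\delta_w\}$ and product $(q\delta_w)(q'\delta_{w'})=q\,w(q')\delta_{ww'}$, $\mathbf 1=\delta_1$; $\delta_\gamma=\delta_{s_\gamma}$, $X_\gamma=\frac1{x_\gamma}(\mathbf 1-\delta_\gamma)$. Dihedral notation: $W=I_2(m)$ with simple roots $\alpha,\beta$; $\Sigma^+$ the positive roots; $y_\gamma=1/x_\gamma\in\mathcal{Q}$ and $y_{\Sigma^+}=\prod_{\gamma\in\Sigma^+}y_\gamma$. $X^{(i)}_{\alpha\ldots}=X_\alpha X_\beta X_\alpha\cdots$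 ($i$ alternating factors), $X^{(i)}_{\beta\ldots}=X_\beta X_\alpha\cdots$, similarly $\delta^{(i)}_{\alpha\ldots},\delta^{(i)}_{\beta\ldots}$ (products of $\delta_\alpha,\delta_\beta$) and $s^{(i)}_{\alpha\ldots},s^{(i)}_{\beta\ldots}$. $\omega_i=\alpha$ if $i$ is even and $\omega_i=\beta$ if $i$ is odd; $X^{(i)}_{\omega_i\ldots}$ means $X^{(i)}_{\alpha\ldots}$ or $X^{(i)}_{\beta\ldots}$ accordingly, and $\kappa^{(i)}_{\omega_i,\omega_{i+1}}$ means $\kappa^{(i)}_{\alpha,\beta}$ or $\kappa^{(i)}_{\beta,\alpha}$ accordingly. The elements $\kappa^{(i)}_{\alpha,\beta},\kappa^{(i)}_{\beta,\alpha}\in\mathcal{Q}$ ($1\le i\le m-2$) are the unique elements with $X^{(m)}_{\alpha\ldots}-X^{(m)}_{\beta\ldots}=\sum_{i=1}^{m-2}\big(\kappa^{(i)}_{\alpha,\beta}X^{(i)}_{\alpha\ldots}-\kappa^{(i)}_{\beta,\alpha}X^{(i)}_{\beta\ldots}\big)$. *)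

From HB Require Import structures.
From mathcomp Require Import all_boot all_order all_algebra.
Set Implicit Arguments. Unset Strict Implicit. Unset Printing Implicit Defensive.
Import Order.TTheory GRing.Theory Num.Theory.
Local Open Scope ring_scope.

(* Roots: Sigma = {gamma_j : j in Z/2m}, gamma_j = (cos(j pi/m),          *)
(*   positive roots Sigma^+ = {gamma_j : 0 <= j < m}.                     *)
(* W elements: (false, r) = rotation by 2 r pi / m  (gamma_j -> gamma_(j+2r))*)
(*             (true, r)  = reflection gamma_j -> gamma_(2r+m-j).          *)

Definition dihW (m : nat) := (bool * 'Z_m)%type.

Definition wone (m : nat) : dihW m := (false, 0).

Definition wmul (m : nat) (w v : dihW m) : dihW m :=
  (w.1 (+) v.1, if w.1 then w.2 - v.2 else w.2 + v.2).

Definition root_ix (m : nat) := 'Z_(2 * m).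

Definition wact (m : nat) (w : dihW m) (j : root_ix m) : root_ix m :=
  if w.1 then - j + ((2 * val w.2 + m)%N%:R : root_ix m)
  else j + ((2 * val w.2)%N%:R : root_ix m).

Definition srefl (m : nat) (k : root_ix m) : dihW m := (true, (val k)%:R).

Definition alpha_ix (m : nat) : root_ix m := 0.
Definition beta_ix (m : nat) : root_ix m := (m.-1)%:R.

Definition simple_ix (m : nat) (b : bool) : root_ix m :=
  if b then beta_ix m else alpha_ix m.

Section TwistedGroupAlgebra.
Variables (m : nat) (Q : comUnitRingType) (act : dihW m -> Q -> Q).

(* Q_W: left Q-module with basis delta_w, w in W; an element is the      *)
(* finite function w |-> coefficient of delta_w.                          *)
Definition QW := {ffun dihW m -> Q}.

Definition qscale (q : Q) (f : QW) : QW := [ffun v => q * f v].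

Definition delta (w : dihW m) : QW := [ffun v => (v == w)%:R].

Definition qwone : QW := delta (wone m).

(* (q delta_w)(q' delta_w') = q w(q') delta_(w w') *)
Definition qwmul (f g : QW) : QW :=
  [ffun u => \sum_(w : dihW m) \sum_(v : dihW m | wmul w v == u)
                f w * act w (g v)].

Fixpoint altprod (f : bool -> QW) (b : bool) (i : nat) : QW :=
  match i with
  | 0 => qwone
  | i'.+1 => qwmul (f b) (altprod f (~~ b) i')
  end.

Variable x : root_ix m -> Q.

Definition y_ (j : root_ix m) : Q := (x j)^-1.

Definition Xop (j : root_ix m) : QW :=
  qscale (y_ j) (qwone - delta (srefl j)).

Definition Xw (b : bool) (i : nat) : QW :=
  altprod (fun c => Xop (simple_ix m c)) b i.

Definition deltaw (b : bool) (i : nat) : QW :=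
  altprod (fun c => delta (srefl (simple_ix m c))) b i.

Definition ySigmaPlus : Q := \prod_(j : root_ix m | (val j < m)%N) y_ j.

Definition Dsum : QW :=
  \sum_(1 <= i < m) qscale ((-1) ^+ i) (deltaw false (m - i) + deltaw true (m - i)).

End TwistedGroupAlgebra.

From HB Require Import structures.
From mathcomp Require Import all_boot all_order all_algebra.
From mathcomp Require Import ring zify.
Set Implicit Arguments. Unset Strict Implicit. Unset Printing Implicit Defensive.
Import GRing.Theory.
Local Open Scope ring_scope.

(** Let [A_b] be [X^(m)_b] minus the kappa-part of the claimed formula for it.
    The defining relation of the kappa's says exactly that [A_alpha = A_beta].
    Since [X_gamma delta_gamma = - X_gamma], every [X^(i)] changes sign under right
    multiplication by the delta of its last letter, and the alpha- and beta-words of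
    length [m] end with different letters; so [A := A_alpha = A_beta] changes sign
    under right multiplication by both simple reflections, i.e. [A = A(1) * sign].
    At the longest element only [X^(m)] has a nonzero coefficient, namely [(-1)^m]
    times the product of the [y] over the roots [s_alpha s_beta ... (simple root)],
    which are exactly the positive roots; hence [A(1) = y_{Sigma+}].  Finally
    [delta^(m) + D = (-1)^m (sign - 1)], because the reduced words of length
    [1 .. m] enumerate [W] without the identity, the longest element counted once. *)


Lemma sumr_nat_mirror (V : nmodType) (F : nat -> V) n : (0 < n)%N ->
  F n + \sum_(1 <= i < n) (F (n - i)%N + F (n + i)%N) = \sum_(1 <= j < 2 * n) F j.
Proof.
move=> n_gt0; rewrite big_split /= [RHS](@big_cat_nat _ _ _ n) //=; try lia.
rewrite (@big_ltn _ _ _ n) /=; last lia.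
have -> : \sum_(1 <= j < n) F j = \sum_(1 <= i < n) F (n - i)%N.
  by rewrite big_nat_rev; apply: eq_bigr => i _; rewrite (_ : 1 + n - i.+1 = n - i)%N //; lia.
have -> : \sum_(n.+1 <= j < 2 * n) F j = \sum_(1 <= i < n) F (n + i)%N.
  rewrite -[n.+1]add1n big_addn (_ : 2 * n - n = n)%N; last lia.
  by apply: eq_bigr => i _; rewrite addnC.
exact: addrCA.
Qed.

Lemma sign_addM2 (R : pzRingType) k i : (-1) ^+ (k * 2 + i) = (-1) ^+ i :> R.
Proof. by rewrite exprD exprM sqrr_sign mul1r. Qed.

Section DihedralGroup.
Variable m : nat.

Definition winv (w : dihW m) : dihW m := if w.1 then w else (false, - w.2).

Lemma wmulA : associative (@wmul m).
Proof. by case=> [[] a] [[] b] [[] c]; rewrite /wmul /=; congr pair; ring. Qed.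

Lemma wmul1w : left_id (wone m) (@wmul m).
Proof. by case=> [[] a]; rewrite /wmul /= add0r. Qed.

Lemma wmulw1 : right_id (wone m) (@wmul m).
Proof. by case=> [[] a]; rewrite /wmul /= ?subr0 ?addr0. Qed.

Lemma wmulVw w : wmul (winv w) w = wone m.
Proof. by case: w => [[] a]; rewrite /wmul /winv /wone /= ?subrr ?addNr. Qed.

Lemma wmulwV w : wmul w (winv w) = wone m.
Proof. by case: w => [[] a]; rewrite /wmul /winv /wone /= ?subrr ?addrN. Qed.

Lemma winv1 : winv (wone m) = wone m.
Proof. by rewrite /winv /= oppr0. Qed.

Lemma eq_wmull w v u : (wmul w v == u) = (v == wmul (winv w) u).
Proof.
apply/eqP/eqP=> [<-|->]; first by rewrite wmulA wmulVw wmul1w.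
by rewrite wmulA wmulwV wmul1w.
Qed.

Lemma eq_wmulr w v u : (wmul w v == u) = (w == wmul u (winv v)).
Proof.
apply/eqP/eqP=> [<-|->]; first by rewrite -wmulA wmulwV wmulw1.
by rewrite -wmulA wmulVw wmulw1.
Qed.

Definition sr (c : bool) : dihW m := srefl (simple_ix m c).

Lemma winv_sr c : winv (sr c) = sr c. Proof. by []. Qed.

Lemma sr_invol c u : wmul (sr c) (wmul (sr c) u) = u.
Proof. by rewrite wmulA -{1}(winv_sr c) wmulVw wmul1w. Qed.

Lemma sr_wmul_eq1 c u : (wmul (sr c) u == wone m) = (u == sr c).
Proof. by rewrite eq_wmull winv_sr wmulw1. Qed.

Lemma wmul_sr_eq1 c u : (wmul u (sr c) == wone m) = (u == sr c).
Proof. by rewrite eq_wmulr winv_sr wmul1w. Qed.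

Lemma sr_alpha : sr false = (true, 0).
Proof. by []. Qed.

Fixpoint altw (b : bool) (k : nat) : dihW m :=
  if k is k'.+1 then wmul (sr b) (altw (~~ b) k') else wone m.

Lemma sr_mul_altw c b k :
  exists b' k', (k' <= k.+1)%N /\ wmul (sr c) (altw b k) = altw b' k'.
Proof.
have [->|/negPf ne_bc] := eqVneq b (~~ c); first by exists c, k.+1.
have -> : b = c by move: ne_bc; case: b; case: c.
case: k => [|k]; first by exists c, 1%N; rewrite /= !wmulw1.
by exists (~~ c), k; split; [lia | rewrite /= sr_invol].
Qed.

Hypothesis m_gt1 : (1 < m)%N.

Lemma sr_beta : sr true = (true, -1).
Proof.
rewrite /sr /srefl /= val_Zp_nat ?modn_small; try lia.
congr pair; apply/eqP; rewrite -subr_eq0 opprK natr1 prednK ?pchar_Zp //; lia.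
Qed.

Lemma altwE b k :
  altw b k = (odd k, if b then - ((k.+1)./2)%:R else (k./2)%:R).
Proof.
elim: k b => [|k IH] [] /=; rewrite ?oppr0 // IH ?sr_beta ?sr_alpha /wmul /=.
  by congr pair; rewrite -natr1; ring.
by rewrite sub0r opprK.
Qed.

Definition wenum (j : nat) : dihW m := (odd j, (j./2)%:R).
Definition windex (u : dihW m) : nat := (2 * val u.2 + u.1)%N.

Lemma modn_double_half a : (a %% (2 * m) = 2 * (a./2 %% m) + odd a)%N.
Proof.
rewrite {1}(_ : a = 2 * a./2 + odd a)%N; last by rewrite -{1}(odd_double_half a); lia.
rewrite -modnDml -muln_modr modn_small //.
have := ltn_pmod a./2 (ltnW m_gt1); case: (odd a); lia.
Qed.

Lemma windex_wenum j : (j < 2 * m)%N -> windex (wenum j) = j.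
Proof.
move=> lt_j; rewrite /windex /= val_Zp_nat // -modn_double_half modn_small //.
Qed.

Lemma windex_lt u : (windex u < 2 * m)%N.
Proof.
have : (val u.2 < m)%N by rewrite -[X in (_ < X)%N](Zp_cast m_gt1) ltn_ord.
by rewrite /windex; case: u.1; lia.
Qed.

Lemma wenumK u : wenum (windex u) = u.
Proof.
case: u => b a.
by rewrite /wenum /windex mul2n addnC half_bit_double natr_Zp oddD odd_double addbF oddb.
Qed.

Lemma altw_alpha k : altw false k = wenum k.
Proof. by rewrite altwE. Qed.

Lemma altw_beta k : (k <= m)%N -> altw true k = wenum (2 * m - k).
Proof.
move=> le_km; rewrite altwE /wenum oddB ?oddM ?leq_mul2l //= ?addFb; last lia.
congr pair; apply/eqP; rewrite eq_sym -subr_eq0 opprK -natrD.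
have := odd_double_half k; have := odd_double_half (2 * m - k).
rewrite oddB ?oddM //= ?addFb; last lia.
rewrite uphalf_half; case: (odd k) => /= h1 h2.
all: by rewrite (_ : _ + _ = m)%N ?pchar_Zp //; lia.
Qed.

Lemma altw_braid : altw false m = altw true m.
Proof. by rewrite altw_alpha altw_beta // (_ : 2 * m - m = m)%N //; lia. Qed.

Lemma altw_neq b b' j k : (k < j <= m)%N -> altw b j != altw b' k.
Proof.
move=> lt_kj.
have wenum_altw c n : (n <= m)%N -> exists2 i,
    altw c n = wenum i & (i = n \/ i = 2 * m - n)%N /\ (i < 2 * m)%N.
  case: n => [|n] le_nm; first by exists 0%N; rewrite //; lia.
  case: c; [exists (2 * m - n.+1)%N; first exact: altw_beta
            | exists n.+1; first exact: altw_alpha]; lia.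
have [i -> hi] := wenum_altw b j ltac:(lia).
have [i' -> hi'] := wenum_altw b' k ltac:(lia).
by apply/eqP => /(congr1 windex); rewrite !windex_wenum; lia.
Qed.

Lemma sum_wenum (V : nmodType) (F : dihW m -> V) :
  \sum_(0 <= j < 2 * m) F (wenum j) = \sum_u F u.
Proof.
rewrite big_mkord (reindex (fun j : 'I_(2 * m) => wenum j)) //.
exists (fun u => Ordinal (windex_lt u)) => [j _ | u _]; last exact: wenumK.
by apply: val_inj; rewrite /= windex_wenum.
Qed.

Lemma wact_altw k : wact (altw false k) (simple_ix m (odd k)) = k%:R.
Proof.
have m2_gt1 : (1 < 2 * m)%N by lia.
rewrite altw_alpha /wact /wenum /= val_Zp_nat //.
rewrite -(Zp_nat_mod m2_gt1 k) (modn_double_half k).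
case: (odd k); rewrite /= ?addn0 /alpha_ix ?add0r //.
have m_pred : (m%:R : root_ix m) = m.-1%:R + 1 by rewrite natr1 prednK // ltnW.
by rewrite /beta_ix !natrD m_pred; ring.
Qed.

Lemma sign_antiinvariant (R : pzRingType) (F : dihW m -> R) :
    (forall c u, F (wmul u (sr c)) = - F u) ->
  forall u, F u = (-1) ^+ u.1 * F (wone m).
Proof.
move=> F_anti.
have F_rot r : F (false, r%:R) = F (wone m).
  elim: r => [|r IH] //; rewrite -IH.
  have -> : (false, r.+1%:R) = wmul (wmul (false, r%:R) (sr false)) (sr true).
    by rewrite sr_alpha sr_beta /wmul /= addr0 -natr1 opprK.
  by rewrite !F_anti opprK.
case=> [[] a]; rewrite -(natr_Zp a) -(F_rot a) ?mul1r // expr1 mulN1r.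
by rewrite -(F_anti false) sr_alpha /wmul /= addr0.
Qed.

End DihedralGroup.

Section TwistedGroupAlgebra.
Variables (m : nat) (Q : comUnitRingType) (act : dihW m -> Q -> Q).
Hypotheses (act_add : forall w a b, act w (a + b) = act w a + act w b)
  (act_mul : forall w a b, act w (a * b) = act w a * act w b)
  (act_one : forall w, act w 1 = 1)
  (act_id : forall a, act (wone m) a = a)
  (act_comp : forall w v a, act (wmul w v) a = act w (act v a)).
Hypothesis m_gt1 : (1 < m)%N.
Variable x : root_ix m -> Q.
Hypotheses (x_unit : forall j, x j \is a GRing.unit)
  (x_equiv : forall w j, act w (x j) = x (wact w j)).

Lemma act0 w : act w 0 = 0.
Proof. by apply: (addrI (act w 0)); rewrite -act_add !addr0. Qed.

Lemma actN w a : act w (- a) = - act w a.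
Proof. by apply/eqP; rewrite -addr_eq0 -act_add addNr act0. Qed.

Lemma act_bool w (c : bool) : act w c%:R = c%:R.
Proof. by case: c; rewrite ?act_one ?act0. Qed.

Lemma act_sign w i : act w ((-1) ^+ i) = (-1) ^+ i.
Proof. by elim: i => [|i IH]; rewrite ?act_one // exprS act_mul actN act_one IH. Qed.

Lemma act_prod w (I : Type) (r : seq I) (P : pred I) (F : I -> Q) :
  act w (\prod_(i <- r | P i) F i) = \prod_(i <- r | P i) act w (F i).
Proof. by elim/big_rec2: _ => [|i a b _ <-]; rewrite ?act_one ?act_mul. Qed.

Lemma act_y w j : act w (y_ x j) = y_ x (wact w j).
Proof. by rewrite /y_ -x_equiv; apply/esym/mulr1_eq; rewrite -act_mul mulrV ?act_one. Qed.

Notation QW := (QW m Q).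
Notation qwmul := (qwmul act).
Notation X := (Xw act x).
Notation s := (sr m).
Notation altw := (altw m).
Notation wenum := (wenum m).

Lemma qscaleE c (F : QW) u : qscale c F u = c * F u.
Proof. by rewrite ffunE. Qed.

Lemma sum_indicator_mul (a : dihW m) (H : dihW m -> Q) :
  \sum_w (w == a)%:R * H w = H a.
Proof.
rewrite (bigD1 a) //= eqxx mul1r big1 ?addr0 // => w /negbTE ->.
by rewrite mul0r.
Qed.

Lemma qwmulE (F G : QW) u :
  qwmul F G u = \sum_w F w * act w (G (wmul (winv w) u)).
Proof.
rewrite ffunE; apply: eq_bigr => w _.
by rewrite (big_pred1 (wmul (winv w) u)) // => v; rewrite /= eq_wmull.
Qed.

Lemma delta_mul a b : qwmul (delta Q a) (delta Q b) = delta Q (wmul a b).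
Proof.
apply/ffunP=> u; rewrite qwmulE.
under eq_bigr => w _ do rewrite !ffunE.
by rewrite sum_indicator_mul act_bool ffunE [u == _]eq_sym [wmul a b == u]eq_wmull eq_sym.
Qed.

Lemma deltaw_altw b k : deltaw act b k = delta Q (altw b k).
Proof.
elim: k b => [|k IH] b //.
by rewrite -[deltaw _ _ _]/(qwmul (delta Q (s b)) (deltaw act (~~ b) k)) IH delta_mul.
Qed.

Lemma Xw_succE b k u : X b k.+1 u =
  y_ x (simple_ix m b) * (X (~~ b) k u - act (s b) (X (~~ b) k (wmul (s b) u))).
Proof.
rewrite [X b k.+1]/= qwmulE.
under eq_bigr => w _ do rewrite !ffunE mulrBr mulrBl.
rewrite sumrB mulrBr; congr (_ - _); rewrite -(eq_bigr _ (fun w _ => mulrA _ _ _)).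
  by rewrite -mulr_sumr sum_indicator_mul winv1 wmul1w act_id.
by rewrite -mulr_sumr sum_indicator_mul winv_sr.
Qed.

Lemma Xw_antiR c i u : (0 < i)%N ->
  X c i (wmul u (s (c (+) ~~ odd i))) = - X c i u.
Proof.
case: i => // i _; elim: i c u => [|i IH] c u.
  rewrite !Xw_succE /= !ffunE !act_bool addbF !sr_wmul_eq1 wmul_sr_eq1.
  by rewrite eq_wmulr wmulwV; ring.
have -> : c (+) ~~ odd i.+2 = ~~ c (+) ~~ odd i.+1 by case: c => /=; case: (odd i).
by rewrite Xw_succE [in RHS]Xw_succE wmulA !IH actN; ring.
Qed.

Lemma Xw_supp i c u : (forall b k, (k <= i)%N -> u != altw b k) -> X c i u = 0.
Proof.
elim: i c u => [|i IH] c u u_far.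
  by rewrite /= ffunE; have := u_far c 0%N (leqnn 0) => /negPf ->.
rewrite Xw_succE !IH ?act0 ?subr0 ?mulr0 // => b k le_ki.
  apply/eqP => su_eq.
  have [b' [k' [le_k' su_eq']]] := @sr_mul_altw m c b k.
  have := u_far b' k' (leq_trans le_k' (le_ki : (k < i.+1)%N)).
  by rewrite -su_eq' -su_eq sr_invol eqxx.
exact/u_far/leqW.
Qed.

Lemma Xw_top i b : (i <= m)%N -> X b i (altw b i) =
  (-1) ^+ i * \prod_(k < i) act (altw b k) (y_ x (simple_ix m (b (+) odd k))).
Proof.
elim: i b => [|i IH] b le_im; first by rewrite /= ffunE eqxx big_ord0 mulr1.
rewrite Xw_succE Xw_supp => [|b' k le_ki]; last by apply: (altw_neq m_gt1); lia.
rewrite [altw b i.+1]/= sr_invol IH 1?ltnW // act_mul act_sign act_prod.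
rewrite big_ord_recl /= act_id addbF exprS.
under [in RHS]eq_bigr => k _ do rewrite act_comp addbN -addNb.
ring.
Qed.

Lemma ySigmaPlusE : ySigmaPlus x = \prod_(k < m) y_ x k%:R.
Proof.
have le_m : (m <= (Zp_trunc (2 * m)).+2)%N by rewrite Zp_cast; lia.
rewrite (big_ord_widen _ (fun k => y_ x k%:R) le_m).
by apply: eq_bigr => j _; rewrite natr_Zp.
Qed.

Lemma Xw_top_alpha : X false m (altw false m) = (-1) ^+ m * ySigmaPlus x.
Proof.
rewrite Xw_top // ySigmaPlusE; congr (_ * _); apply: eq_bigr => k _.
by rewrite act_y wact_altw.
Qed.

Lemma deltaw_add_DsumE b u : (deltaw act b m + Dsum act) u =
  (-1) ^+ m * ((-1) ^+ u.1 - (u == wone m)%:R).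
Proof.
rewrite !ffunE sum_ffunE deltaw_altw ffunE.
pose F j : Q := (-1) ^+ (m + j) * (u == wenum j)%:R.
have altw_top : altw b m = wenum m by case: b; rewrite -?(altw_braid m_gt1) altw_alpha.
have -> : \sum_(1 <= i < m) qscale ((-1) ^+ i)
    (deltaw act false (m - i) + deltaw act true (m - i)) u =
    \sum_(1 <= i < m) (F (m - i)%N + F (m + i)%N).
  apply: eq_big_nat => i /andP [_ lt_im].
  rewrite !ffunE !deltaw_altw !ffunE (altw_alpha m_gt1) (altw_beta m_gt1) ?leq_subr //.
  rewrite /F (_ : 2 * m - (m - i) = m + i)%N; last lia.
  rewrite (_ : m + (m - i) = (m - i) * 2 + i)%N; last lia.
  by rewrite (_ : m + (m + i) = m * 2 + i)%N ?sign_addM2 ?mulrDr //; lia.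
have -> : (u == altw b m)%:R = F m.
  by rewrite altw_top /F (_ : m + m = m * 2 + 0)%N ?sign_addM2 ?mul1r //; lia.
rewrite (sumr_nat_mirror F (ltnW m_gt1)).
have sum_sign : \sum_(0 <= j < 2 * m) (-1) ^+ j * ((u == wenum j)%:R : Q) = (-1) ^+ u.1.
  rewrite (eq_bigr (fun j => (-1) ^+ (wenum j).1 * (u == wenum j)%:R)); last first.
    by move=> j _; rewrite -signr_odd.
  rewrite (sum_wenum m_gt1 (fun v => (-1) ^+ v.1 * (u == v)%:R)) (bigD1 u) //=.
  by rewrite eqxx mulr1 big1 ?addr0 // => v /negPf; rewrite eq_sym => ->; rewrite mulr0.
rewrite -sum_sign [in RHS]big_ltn; last lia.
rewrite expr0 mul1r (_ : wenum 0 = wone m) // addrC addKr mulr_sumr.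
by apply: eq_bigr => j _; rewrite /F exprD mulrA.
Qed.

Definition wsign : QW := [ffun u : dihW m => (-1) ^+ (u.1 : bool)].

Section KappaExpansion.
Variable kappa : bool -> nat -> Q.
Hypothesis kappa_def : X false m - X true m =
  \sum_(1 <= i < m.-1) (qscale (kappa false i) (X false i) - qscale (kappa true i) (X true i)).

Definition kappa_sum b : QW := \sum_(1 <= i < m.-1)
  qscale ((-1) ^+ (m - i) * kappa (b (+) odd i (+) odd m) i) (X (b (+) odd i (+) odd m) i).

Lemma Xw_sub_kappa_sum_eq : X false m - kappa_sum false = X true m - kappa_sum true.
Proof.
have swap (a b c d : QW) : (a - b) - (c - d) = (a - c) - (b - d).
  by rewrite !opprD !opprK addrACA.
apply/eqP; rewrite -subr_eq0 swap kappa_def /kappa_sum -sumrB subr_eq0.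
apply/eqP/eq_big_nat => i /andP [_ lt_im].
apply/ffunP => u; rewrite !ffunE -signr_odd oddB; last lia.
by case: (odd i); case: (odd m); rewrite /= ?expr0 ?expr1 ?mul1r ?mulN1r; ring.
Qed.

Lemma Xw_sub_kappa_sum_antiR b u :
  (X b m - kappa_sum b) (wmul u (s (b (+) ~~ odd m))) = - (X b m - kappa_sum b) u.
Proof.
rewrite !ffunE !sum_ffunE Xw_antiR ?opprB; last lia.
rewrite addrC; congr (_ + _); rewrite -sumrN; apply: eq_big_nat => i /andP [lt0i _].
have -> : b (+) ~~ odd m = (b (+) odd i (+) odd m) (+) ~~ odd i.
  by case: b; case: (odd i); case: (odd m).
by rewrite !qscaleE Xw_antiR // mulrN opprK.
Qed.

Lemma kappa_sum_top b : kappa_sum b (altw false m) = 0.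
Proof.
rewrite sum_ffunE big_nat_cond big1 // => i /andP [/andP [_ lt_im] _].
rewrite qscaleE Xw_supp ?mulr0 // => c k le_ki.
by apply: (altw_neq m_gt1); lia.
Qed.

Lemma Xw_decomposition b : X b m = kappa_sum b + qscale (ySigmaPlus x) wsign.
Proof.
set A := X false m - kappa_sum false.
have A_eq c : X c m - kappa_sum c = A by case: c; rewrite /A ?Xw_sub_kappa_sum_eq.
have A_anti c u : A (wmul u (s c)) = - A u.
  have := Xw_sub_kappa_sum_antiR (c (+) ~~ odd m) u.
  by rewrite A_eq -addbA addbb addbF.
have A_sign := sign_antiinvariant m_gt1 A_anti.
have A_one : A (wone m) = ySigmaPlus x.
  have := A_sign (altw false m).
  rewrite {1}/A !ffunE Xw_top_alpha kappa_sum_top subr0 altwE //= signr_odd => top.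
  by rewrite -[LHS](signrMK m) -top signrMK.
rewrite -[X b m](subrK (kappa_sum b)) A_eq addrC; congr (_ + _).
by apply/ffunP => u; rewrite A_sign A_one qscaleE ffunE mulrC.
Qed.

Lemma Xw_expansion_even b : ~~ odd m ->
  X b m = kappa_sum b + qscale (ySigmaPlus x) (deltaw act b m + Dsum act + qwone m Q).
Proof.
move=> m_even; rewrite Xw_decomposition; congr (_ + _); apply/ffunP => u.
rewrite !qscaleE [(_ + qwone m Q) u]ffunE deltaw_add_DsumE !ffunE.
by rewrite -(signr_odd _ m) (negPf m_even) mul1r subrK.
Qed.

Lemma Xw_expansion_odd b : odd m ->
  X b m = kappa_sum b - qscale (ySigmaPlus x) (deltaw act b m + Dsum act - qwone m Q).
Proof.
move=> m_odd; rewrite Xw_decomposition; congr (_ + _); apply/ffunP => u.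
rewrite [(- qscale _ _) u]ffunE !qscaleE [(_ - qwone m Q) u]ffunE deltaw_add_DsumE !ffunE.
by rewrite -(signr_odd _ m) m_odd; ring.
Qed.

End KappaExpansion.

End TwistedGroupAlgebra.

Theorem corollary6p2 (m : nat) (hm : (3 <= m)%N)
  (Q : comUnitRingType) (act : dihW m -> Q -> Q)
  (act_add : forall w a b, act w (a + b) = act w a + act w b)
  (act_mul : forall w a b, act w (a * b) = act w a * act w b)
  (act_one : forall w, act w 1 = 1)
  (act_id : forall a, act (wone m) a = a)
  (act_comp : forall w v a, act (wmul w v) a = act w (act v a))
  (x : root_ix m -> Q)
  (x_unit : forall j, x j \is a GRing.unit)
  (x_equiv : forall w j, act w (x j) = x (wact w j))
  (kappa : bool -> nat -> Q)
  (hkappa : Xw act x false m - Xw act x true m =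
     \sum_(1 <= i < m.-1)
        (qscale (kappa false i) (Xw act x false i)
         - qscale (kappa true i) (Xw act x true i))) :
  (~~ odd m ->
     Xw act x false m =
       \sum_(1 <= i < m.-1)
          qscale ((-1) ^+ (m - i) * kappa (odd i) i) (Xw act x (odd i) i)
       + qscale (ySigmaPlus x)
           (deltaw act false m + Dsum act + qwone m Q)
   /\
     Xw act x true m =
       \sum_(1 <= i < m.-1)
          qscale ((-1) ^+ (m - i) * kappa (~~ odd i) i) (Xw act x (~~ odd i) i)
       + qscale (ySigmaPlus x)
           (deltaw act true m + Dsum act + qwone m Q))
  /\
  (odd m ->
     Xw act x false m =
       \sum_(1 <= i < m.-1)
          qscale ((-1) ^+ (m - i) * kappa (~~ odd i) i) (Xw act x (~~ odd i) i)
       - qscale (ySigmaPlus x)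
           (deltaw act false m + Dsum act - qwone m Q)
   /\
     Xw act x true m =
       \sum_(1 <= i < m.-1)
          qscale ((-1) ^+ (m - i) * kappa (odd i) i) (Xw act x (odd i) i)
       - qscale (ySigmaPlus x)
           (deltaw act true m + Dsum act - qwone m Q)).
Proof.
have m_gt1 : (1 < m)%N by lia.
have even_expansion := Xw_expansion_even act_add act_mul act_one act_id act_comp
  m_gt1 x_unit x_equiv hkappa.
have odd_expansion := Xw_expansion_odd act_add act_mul act_one act_id act_comp
  m_gt1 x_unit x_equiv hkappa.
split=> [m_even | m_odd]; split.
- rewrite even_expansion //; congr (_ + _).
  by apply: eq_bigr => i _; rewrite (negPf m_even) addbF.
- rewrite even_expansion //; congr (_ + _).
  by apply: eq_bigr => i _; rewrite (negPf m_even) addbF.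
- rewrite odd_expansion //; congr (_ - _).
  by apply: eq_bigr => i _; rewrite m_odd addbT.
- rewrite odd_expansion //; congr (_ - _).
  by apply: eq_bigr => i _; rewrite m_odd addbT /= negbK.
Qed.
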